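(* For every integer $n\ge 0$, $$B_{n+1}\!\left(t+\frac{1}{t}\right)=\sum_{i=0}^{n}t^{\nu(n-i)-\nu(i)}.$$
   Context: The Stern polynomials $B_n(t)\in\mathbb{Z}[t]$, $n\ge 0$, are defined by $B_0(t)=0$, $B_1(t)=1$, $B_{2n}(t)=tB_n(t)$ and $B_{2n+1}(t)=B_n(t)+B_{n+1}(t)$ for $n\ge 1$. For $n\ge 0$, $\nu(n)$ denotes the number of digits $1$ in the binary representation of $n$. *)

From HB Require Import structures.
From mathcomp Require Import all_boot all_order all_algebra.
Set Implicit Arguments. Unset Strict Implicit. Unset Printing Implicit Defensive.
Import Order.TTheory GRing.Theory Num.Theory.

(* nu n = number of digits 1 in the binary expansion of n:
   bit i of n is odd (n %/ 2^i); bits at positions >= n vanish since n < 2^n. *)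
Definition nu (n : nat) : nat := \sum_(i < n.+1) odd (n %/ 2 ^ i).

(** Both sides satisfy the Stern recursion once the argument of [B] is read as
    [n.+1]: doubling the index multiplies by [x = t + t^-1], and passing to an
    odd index adds the two neighbouring values.  For the Laurent sums this comes
    from splitting [i] by parity and using [nu (2a) = nu a] and
    [nu (2a+1) = nu a + 1]: for an even total index the exponents pair up
    unchanged, while for an odd total index the even and odd [i] contribute the
    exponents shifted by [+1] and [-1].  Two sequences obeying the same
    recursion with the same initial value agree. *)

From HB Require Import structures.
From mathcomp Require Import all_boot all_order all_algebra zify.
Import Order.TTheory GRing.Theory Num.Theory.

Set Implicit Arguments.
Unset Strict Implicit.
Unset Printing Implicit Defensive.

Definition bitsum (k n : nat) : nat := \sum_(i < k) odd (n %/ 2 ^ i).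

Lemma bitsumS k n : bitsum k.+1 n = odd n + bitsum k n./2.
Proof.
rewrite /bitsum big_ord_recl /= expn0 divn1; congr (_ + _).
by apply: eq_bigr => i _; rewrite /bump /= expnS divnMA divn2.
Qed.

Lemma bitsum_widen k l n : k <= l -> n < 2 ^ k -> bitsum l n = bitsum k n.
Proof.
move=> /subnKC <- n_lt; elim: (l - k) => [|m IHm]; first by rewrite addn0.
rewrite addnS /bitsum big_ord_recr /= -/(bitsum _ n) IHm divn_small ?addn0 //.
by apply: leq_trans n_lt _; rewrite leq_exp2l // leq_addr.
Qed.

Lemma nu_bitsum k n : n < 2 ^ k -> nu n = bitsum k n.
Proof.
have n_lt : n < 2 ^ n.+1 by apply: ltn_trans (ltn_expl n (ltnSn 1)) _; rewrite ltn_exp2l.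
move=> n_ltk; rewrite /nu -/(bitsum _ n).
case: (leqP k n.+1) => [le_k | /ltnW le_n].
  exact: bitsum_widen.
by rewrite (bitsum_widen le_n).
Qed.

Lemma nu_half n : nu n = odd n + nu n./2.
Proof.
rewrite [LHS]/nu -/(bitsum _ n) bitsumS (@nu_bitsum n) //.
by rewrite ltn_half_double -mul2n -expnS (ltn_trans (ltnSn n)) // ltn_expl.
Qed.

Lemma nu_double a : nu a.*2 = nu a.
Proof. by rewrite nu_half odd_double doubleK. Qed.

Lemma nu_doubleS a : nu a.*2.+1 = (nu a).+1.
Proof. by rewrite nu_half /= odd_double uphalf_double. Qed.

Local Open Scope ring_scope.

Section ParitySplit.
Variables (V : nmodType) (h : nat -> V).

Lemma big_ord_double n :
  \sum_(i < n.*2) h i = \sum_(a < n) h a.*2 + \sum_(a < n) h a.*2.+1.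
Proof.
elim: n => [|n IHn]; first by rewrite !big_ord0 addr0.
by rewrite doubleS !big_ord_recr /= IHn -!addrA; congr (_ + _); rewrite addrCA.
Qed.

Lemma big_ord_doubleS n :
  \sum_(i < n.*2.+1) h i = \sum_(a < n.+1) h a.*2 + \sum_(a < n) h a.*2.+1.
Proof. by rewrite big_ord_recr /= big_ord_double big_ord_recr /= addrAC. Qed.

End ParitySplit.

Definition stern_rec (R : nzSemiRingType) (x : R) (b : nat -> R) :=
  forall m, (0 < m)%N -> b m.*2 = x * b m /\ b m.*2.+1 = b m + b m.+1.

Lemma stern_rec_unique (R : nzSemiRingType) (x : R) (b c : nat -> R) :
  stern_rec x b -> stern_rec x c -> b 1%N = c 1%N ->
  forall n, (0 < n)%N -> b n = c n.
Proof.
move=> b_rec c_rec bc1; elim/ltn_ind=> -[|[|n]] // IHn _.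
move: (odd_double_half n.+2) IHn; set m := n.+2./2.
have m_gt0 : (0 < m)%N by [].
have [[b_even b_odd] [c_even c_odd]] := (b_rec m m_gt0, c_rec m m_gt0).
case: (odd n.+2) => /= <- IHn.
  by rewrite add1n b_odd c_odd !IHn //; lia.
by rewrite add0n b_even c_even IHn //; lia.
Qed.

Section LaurentSum.
Variables (F : fieldType) (t : F).
Hypothesis t_neq0 : t != 0.

Definition laurent_sum (n : nat) : F :=
  \sum_(i < n.+1) t ^ ((nu (n - i))%:Z - (nu i)%:Z).

Lemma laurent_sum0 : laurent_sum 0 = 1.
Proof. by rewrite /laurent_sum big_ord1 subrr expr0z. Qed.

Lemma laurent_sum_doubleS m : laurent_sum m.*2.+1 = (t + t^-1) * laurent_sum m.
Proof.
rewrite /laurent_sum -doubleS mulrDl !mulr_sumr.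
rewrite (big_ord_double (fun i => t ^ ((nu (m.*2.+1 - i))%:Z - (nu i)%:Z))).
congr (_ + _); apply: eq_bigr => a _.
  have -> : (m.*2.+1 - a.*2 = (m - a).*2.+1)%N.
    by rewrite subSn ?doubleB // leq_double -ltnS.
  rewrite nu_doubleS nu_double -(addn1 (nu (m - a))) PoszD addrAC.
  by rewrite [LHS]expfzDr // expr1z mulrC.
have -> : (m.*2.+1 - a.*2.+1 = (m - a).*2)%N by rewrite subSS doubleB.
rewrite nu_doubleS nu_double -(addn1 (nu a)) PoszD opprD addrA.
by rewrite [LHS]expfzDr // mulrC exprN1.
Qed.

Lemma laurent_sum_double m :
  laurent_sum m.+1.*2 = laurent_sum m + laurent_sum m.+1.
Proof.
rewrite /laurent_sum addrC.
rewrite (big_ord_doubleS (fun i => t ^ ((nu (m.+1.*2 - i))%:Z - (nu i)%:Z))).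
congr (_ + _); apply: eq_bigr => a _.
  by rewrite /= -doubleB !nu_double.
have -> : (m.+1.*2 - a.*2.+1 = (m - a).*2.+1)%N.
  by rewrite doubleS subSS subSn ?doubleB // leq_double -ltnS.
rewrite /= !nu_doubleS -(addn1 (nu (m - a))) -(addn1 (nu a)) !PoszD.
by rewrite opprD addrACA subrr addr0.
Qed.

Lemma laurent_sum_stern_rec : stern_rec (t + t^-1) (fun n => laurent_sum n.-1).
Proof.
move=> [|m] // _; split; first by rewrite doubleS /= laurent_sum_doubleS.
by rewrite /= laurent_sum_double.
Qed.

End LaurentSum.

Theorem theorem3p7 (B : nat -> {poly int})
  (B0 : B 0%N = 0) (B1 : B 1%N = 1)
  (Beven : forall n : nat, (1 <= n)%N -> B (n.*2)%N = 'X * B n)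
  (Bodd : forall n : nat, (1 <= n)%N -> B (n.*2.+1)%N = B n + B n.+1)
  (F : fieldType) (t : F) (ht : t != 0) (n : nat) :
  (map_poly (fun z : int => z%:~R) (B n.+1)).[t + t^-1]
  = \sum_(i < n.+1) t ^ ((nu (n - i))%:Z - (nu i)%:Z).
Proof.
pose eval_B m := (map_poly (fun z : int => z%:~R : F) (B m)).[t + t^-1].
have eval_B_rec : stern_rec (t + t^-1) eval_B.
  move=> m m_gt0; rewrite /eval_B Beven // Bodd // rmorphM rmorphD /=.
  by rewrite map_polyX hornerM hornerX hornerD mulrC.
apply: (stern_rec_unique eval_B_rec (laurent_sum_stern_rec ht)) => //.
by rewrite /eval_B B1 rmorph1 hornerC laurent_sum0.
Qed.
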